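(* Let $k\ge 3$ be odd and let $G$ be the $k$-uniform sunflower, with Laplacian tensor $\mathcal L$. Then $\lambda(\mathcal L)=2$.
   Context: A $k$-uniform hypergraph $G=(V,E)$ has vertex set $V=[n]$ and a nonempty set $E$ of $k$-element subsets of $V$; $d_i$ is the number of edges containing $i$. The $k$-uniform sunflower has vertex set $\{i_{j,s}: j\in[k-1], s\in[k]\}\cup\{i_k\}$ (all distinct) and edges $\{i_{j,1},\ldots,i_{j,k}\}$ for $j\in[k-1]$ together with $\{i_{1,1},\ldots,i_{k-1,1},i_k\}$. The Laplacian tensor $\mathcal L$ of $G$ acts by $(\mathcal L\mathbf x^{k-1})_i=d_ix_i^{k-1}-\sum_{e\in E,\,i\in e}\prod_{s\in e\setminus\{i\}}x_s$ (it is $\mathcal D-\mathcal A$ with $\mathcal D$ the diagonal degree tensor and $\mathcal A$ the adjacency tensor with entries $\frac1{(k-1)!}$ on edges). A real $\lambda$ is an H-eigenvalue of $\mathcal L$ if some nonzero $\mathbf x\in\mathbb R^n$ satisfies $(\mathcal L\mathbf x^{k-1})_i=\lambda x_i^{k-1}$ for all $i$; $\lambda(\mathcal L)$ is the largest H-eigenvalue. *)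

From HB Require Import structures.
From mathcomp Require Import all_boot all_order all_algebra.
From mathcomp Require Import reals.
Set Implicit Arguments. Unset Strict Implicit. Unset Printing Implicit Defensive.
Import Order.TTheory GRing.Theory Num.Theory.
Local Open Scope ring_scope.

Definition hdeg (V : finType) (E : {set {set V}}) (i : V) : nat :=
  #|[set e in E | i \in e]|.

(* (L x^{k-1})_i = d_i x_i^{k-1} - sum_{e in E, i in e} prod_{s in e \ {i}} x_s *)
Definition lap_apply (R : comPzRingType) (V : finType) (E : {set {set V}})
    (k : nat) (x : V -> R) (i : V) : R :=
  (hdeg E i)%:R * x i ^+ (k - 1) - \sum_(e in E | i \in e) \prod_(s in e :\ i) x s.

Definition is_H_eigenvalue (R : realType) (V : finType) (E : {set {set V}})
    (k : nat) (lam : R) : Prop :=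
  exists x : V -> R, (exists i, x i != 0) /\
    forall i, lap_apply E k x i = lam * x i ^+ (k - 1).

Definition is_largest_H_eigenvalue (R : realType) (V : finType)
    (E : {set {set V}}) (k : nat) (lam : R) : Prop :=
  is_H_eigenvalue E k lam /\ forall mu : R, is_H_eigenvalue E k mu -> mu <= lam.

(* k-uniform sunflower: vertices i_{j,s} = Some (j,s) (j in [k-1], s in [k])
   and the center i_k = None. *)
Definition sunflower_V (k : nat) : finType := option ('I_(k.-1) * 'I_k).

Definition petal (k : nat) (j : 'I_(k.-1)) : {set sunflower_V k} :=
  [set Some (j, s) | s : 'I_k].

Definition center_edge (k : nat) : {set sunflower_V k} :=
  None |: [set Some p | p in [pred p : 'I_(k.-1) * 'I_k | val p.2 == 0%N]].

Definition sunflower (k : nat) : {set {set sunflower_V k}} :=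
  center_edge k |: [set petal j | j : 'I_(k.-1)].

From HB Require Import structures.
From mathcomp Require Import all_boot all_order all_algebra.
From mathcomp Require Import reals ring lra zify.
Set Implicit Arguments. Unset Strict Implicit. Unset Printing Implicit Defensive.
Import Order.TTheory GRing.Theory Num.Theory.
Local Open Scope ring_scope.

(* In a k-uniform hypergraph with k >= 3 the indicator vector of a vertex v is an
   eigenvector for the eigenvalue deg v; in the sunflower the vertices where the centre
   edge meets a petal have degree 2.  Conversely, multiplying the eigen-equation at each
   vertex by its coordinate relates odd powers of coordinates to edge products.  If the
   eigenvalue exceeds 2, every coordinate then has the sign opposite to the edge products
   around it; as each edge product is one coordinate times an even number of others, a
   sign chase (symmetric under x -> -x, since k is odd) shows that the centre-edge product
   and then every petal product vanish, hence so does every coordinate. *)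

Lemma hdegE (R : pzSemiRingType) (V : finType) (E : {set {set V}}) (v : V) :
  (hdeg E v)%:R = \sum_(e in E | v \in e) (1 : R).
Proof. by rewrite /hdeg -sumr_const; apply: eq_bigl => e; rewrite inE. Qed.

Lemma mulX_lap_apply (R : comPzRingType) (V : finType) (E : {set {set V}})
    (k : nat) (x : V -> R) (v : V) :
  (0 < k)%N ->
  x v * lap_apply E k x v = \sum_(e in E | v \in e) (x v ^+ k - \prod_(s in e) x s).
Proof.
move=> k_gt0; have xvk : x v ^+ k = x v * x v ^+ (k - 1) by rewrite -exprS subn1 prednK.
rewrite sumrB /lap_apply mulrBr hdegE mulr_suml !mulr_sumr xvk; congr (_ - _).
- by apply: eq_bigr => e _; rewrite mul1r.
- by apply: eq_bigr => e /andP[_ ve]; rewrite (big_setD1 _ ve).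
Qed.

Lemma uniform_hdeg_H_eigenvalue (R : realType) (V : finType) (E : {set {set V}})
    (k : nat) (v : V) :
  (2 < k)%N -> {in E, forall e : {set V}, #|e| = k} -> is_H_eigenvalue E k ((hdeg E v)%:R : R).
Proof.
move=> k_gt2 unifE; pose x w : R := (w == v)%:R.
exists x; split; first by exists v; rewrite /x eqxx oner_eq0.
move=> i; rewrite /lap_apply big1 ?subr0 => [|e /andP[eE ie]].
  have [-> //|iv] := eqVneq i v.
  by rewrite /x (negPf iv) expr0n subn_eq0 leqNgt (ltn_trans _ k_gt2) ?mulr0.
(* as k >= 3, e :\ i contains a vertex w <> v, on which x vanishes *)
have : (0 < #|e :\ i :\ v|)%N.
  move: (cardsD1 i e) (cardsD1 v (e :\ i)); rewrite unifE // ie.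
  by case: (v \in e :\ i) => /=; lia.
case/card_gt0P => w; rewrite !inE => /and3P[wv wi we].
by rewrite (big_setD1 w) ?inE ?wi ?we //= /x (negPf wv) mul0r.
Qed.

Lemma exprN_odd (R : pzRingType) (p : nat) (t : R) : odd p -> (- t) ^+ p = - t ^+ p.
Proof. by move=> p_odd; rewrite exprNn -signr_odd p_odd expr1 mulN1r. Qed.

Lemma prodrN_even (R : pzRingType) (m : nat) (f : 'I_m -> R) :
  ~~ odd m -> \prod_j - f j = \prod_j f j.
Proof. by move=> m_even; rewrite prodrN card_ord -signr_odd (negPf m_even) mul1r. Qed.

Lemma prodr_lt0_even_gt0 (R : numDomainType) (m : nat) (f : 'I_m -> R) :
  ~~ odd m -> (forall j, f j < 0) -> 0 < \prod_j f j.
Proof.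
by move=> m_even f_lt0; rewrite -prodrN_even // prodr_gt0 // => j _; rewrite oppr_gt0.
Qed.

Lemma lt0_of_nmulrX_gt0 (R : realDomainType) (p : nat) (alpha t q : R) :
  alpha * t ^+ p = q -> alpha < 0 -> 0 < q -> t < 0.
Proof.
move=> <- alpha_lt0 q_gt0; rewrite ltNge; apply: contraTN q_gt0 => t_ge0.
by rewrite -leNgt mulr_le0_ge0 ?exprn_ge0 ?(ltW alpha_lt0).
Qed.

Lemma eq0_of_mulrX_eq0 (R : idomainType) (p : nat) (alpha t : R) :
  alpha * t ^+ p = 0 -> alpha != 0 -> t = 0.
Proof. by move/eqP; rewrite mulf_eq0 expf_eq0 => /orP[->|/andP[_ /eqP]]. Qed.

(* The eigen-equations of the sunflower with m + 1 = k, each multiplied by its own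
   coordinate: [c] is the centre i_k, [a j] the vertex i_{j,1} where petal [j] meets
   the centre edge, and [y j s] the remaining vertices of petal [j]. *)
Definition sunflower_system {R : comPzRingType} {m : nat} (lam c : R)
    (a : 'I_m -> R) (y : 'I_m -> 'I_m -> R) : Prop :=
  [/\ (1 - lam) * c ^+ m.+1 = c * \prod_i a i,
      forall j, (2 - lam) * a j ^+ m.+1 = c * \prod_i a i + a j * \prod_s y j s &
      forall j s, (1 - lam) * y j s ^+ m.+1 = a j * \prod_s' y j s'].

Section SunflowerSystem.
Variables (R : realDomainType) (m : nat) (lam : R).
Hypotheses (m_even : ~~ odd m) (lam_gt2 : 2 < lam).
Implicit Types (c : R) (a : 'I_m -> R) (y : 'I_m -> 'I_m -> R).

Let lam_gt1 : 1 < lam. Proof. by apply: lt_trans lam_gt2; rewrite ltr1n. Qed.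
Let one_sub_lam_lt0 : 1 - lam < 0. Proof. by rewrite subr_lt0. Qed.
Let two_sub_lam_lt0 : 2 - lam < 0. Proof. by rewrite subr_lt0. Qed.

Lemma sunflower_systemN c a y :
  sunflower_system lam c a y ->
  sunflower_system lam (- c) (fun j => - a j) (fun j s => - y j s).
Proof.
case=> hc ha hy; split=> [|j|j s]; rewrite !prodrN_even // !exprN_odd // !mulrN.
- by rewrite hc mulNr.
- by rewrite ha !mulNr opprD.
- by rewrite hy mulNr.
Qed.

Lemma center_prod_le0 c a y : sunflower_system lam c a y -> c * \prod_j a j <= 0.
Proof.
case=> hc ha hy; rewrite leNgt; apply/negP => Z_gt0.
have c_lt0 : c < 0 by apply: lt0_of_nmulrX_gt0 hc _ Z_gt0.
suff a_lt0 j : a j < 0.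
  by move: Z_gt0; rewrite pmulr_lgt0 ?prodr_lt0_even_gt0 // ltNge (ltW c_lt0).
have [ZP_gt0|ZP_le0] := ltrP 0 (c * \prod_i a i + a j * \prod_s y j s).
  exact: lt0_of_nmulrX_gt0 (ha j) _ ZP_gt0.
(* otherwise the petal product is negative, so the other petal vertices are positive *)
have P_lt0 : a j * \prod_s y j s < 0 by lra.
have y_gt0 s : 0 < y j s.
  have hNy : (1 - lam) * (- y j s) ^+ m.+1 = - (a j * \prod_s y j s).
    by rewrite exprN_odd // mulrN hy.
  by rewrite -oppr_lt0; apply: lt0_of_nmulrX_gt0 hNy _ _; rewrite ?oppr_gt0.
by move: P_lt0; rewrite pmulr_llt0 // prodr_gt0.
Qed.

Lemma center_prod_eq0 c a y : sunflower_system lam c a y -> c * \prod_j a j = 0.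
Proof.
move=> sys; apply/eqP; rewrite eq_le (center_prod_le0 sys) /=.
by rewrite -oppr_le0 -mulNr -prodrN_even // (center_prod_le0 (sunflower_systemN sys)).
Qed.

Lemma petal_prod_le0 c a y j :
  sunflower_system lam c a y -> a j * \prod_s y j s <= 0.
Proof.
move=> sys; have [_ ha hy] := sys; rewrite leNgt; apply/negP => P_gt0.
have a_lt0 : a j < 0.
  by apply: lt0_of_nmulrX_gt0 (ha j) _ _; rewrite ?(center_prod_eq0 sys) ?add0r.
have y_lt0 s : y j s < 0 by apply: lt0_of_nmulrX_gt0 (hy j s) _ P_gt0.
by move: P_gt0; rewrite ltNge nmulr_rle0 // ltW // prodr_lt0_even_gt0.
Qed.

Lemma petal_prod_eq0 c a y j :
  sunflower_system lam c a y -> a j * \prod_s y j s = 0.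
Proof.
move=> sys; apply/eqP; rewrite eq_le (petal_prod_le0 j sys) /=.
by rewrite -oppr_le0 -mulNr -prodrN_even // (petal_prod_le0 j (sunflower_systemN sys)).
Qed.

Lemma sunflower_system_eq0 c a y :
  sunflower_system lam c a y -> [/\ c = 0, forall j, a j = 0 & forall j s, y j s = 0].
Proof.
move=> sys; have [hc ha hy] := sys.
split=> [|j|j s].
- by move: hc; rewrite (center_prod_eq0 sys) => /eq0_of_mulrX_eq0->; rewrite ?lt_eqF.
- move: (ha j); rewrite (center_prod_eq0 sys) (petal_prod_eq0 j sys) addr0.
  by move=> /eq0_of_mulrX_eq0->; rewrite ?lt_eqF.
- by move: (hy j s); rewrite (petal_prod_eq0 j sys) => /eq0_of_mulrX_eq0->; rewrite ?lt_eqF.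
Qed.
End SunflowerSystem.

Section SunflowerCombinatorics.
Variable n : nat.
Local Notation k := n.+1.
Local Notation V := (sunflower_V k).

Lemma mem_petal (j : 'I_n) (v : V) :
  (v \in @petal k j) = if v is Some p then p.1 == j else false.
Proof.
apply/imsetP; case: v => [[j' s]|] /=; last by case.
by case: eqP => [->|ne]; [exists s | case=> s' _ []].
Qed.

Lemma mem_center_edge (v : V) :
  (v \in center_edge k) = if v is Some p then val p.2 == 0%N else true.
Proof.
rewrite in_setU1; case: v => [p|] //=; apply/imsetP.
by case: ifP => p0; [exists p | case=> q; rewrite inE => q0 [] pq; rewrite pq q0 in p0].
Qed.

Lemma petal_inj : injective (@petal k).
Proof.
move=> j1 j2 e; have : Some (j1, ord0) \in @petal k j2 by rewrite -e mem_petal.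
by rewrite mem_petal => /eqP.
Qed.

Lemma center_edge_neq_petal (j : 'I_n) : center_edge k != @petal k j.
Proof.
apply/eqP => e; have : None \in center_edge k by rewrite mem_center_edge.
by rewrite e mem_petal.
Qed.

Lemma sunflower_uniform : {in sunflower k, forall e : {set V}, #|e| = k}.
Proof.
move=> e; rewrite in_setU1 => /orP[/eqP-> | /imsetP[j _ ->]].
- rewrite cardsU1 card_in_imset; last by move=> p q _ _ [].
  have -> : #|[pred p : 'I_n * 'I_k | val p.2 == 0%N]| = #|[predX 'I_n & pred1 (ord0 : 'I_k)]|.
    by apply: eq_card => -[j s]; rewrite !inE.
  by rewrite cardX card_ord card1 muln1 (_ : None \notin _) //; apply/negP => /imsetP[].
- by rewrite -[RHS]card_ord; apply: card_imset => s1 s2 [].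
Qed.

Lemma sum_sunflower_edges (M : nmodType) (F : {set V} -> M) (v : V) :
  \sum_(e in sunflower k | v \in e) F e =
  (if v \in center_edge k then F (center_edge k) else 0) +
  \sum_(j < n) (if v \in @petal k j then F (@petal k j) else 0).
Proof.
rewrite big_mkcondr big_setU1 /=; last first.
  by apply/imsetP => -[j _ cj]; move: (center_edge_neq_petal j); rewrite cj eqxx.
by rewrite big_imset //; move=> j1 j2 _ _; apply: petal_inj.
Qed.

Lemma sum_sunflower_edges_None (M : nmodType) (F : {set V} -> M) :
  \sum_(e in sunflower k | None \in e) F e = F (center_edge k).
Proof.
by rewrite sum_sunflower_edges mem_center_edge big1 ?addr0 // => j _; rewrite mem_petal.
Qed.

Lemma sum_sunflower_edges_Some (M : nmodType) (F : {set V} -> M) (j : 'I_n) (s : 'I_k) :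
  \sum_(e in sunflower k | Some (j, s) \in e) F e =
  (if val s == 0%N then F (center_edge k) else 0) + F (@petal k j).
Proof.
rewrite sum_sunflower_edges mem_center_edge -big_mkcond /=.
by under eq_bigl => j' do rewrite mem_petal eq_sym; rewrite big_pred1_eq.
Qed.

Lemma prod_petal (R : comPzRingType) (x : V -> R) (j : 'I_n) :
  \prod_(s in @petal k j) x s = x (Some (j, ord0)) * \prod_(s < n) x (Some (j, lift ord0 s)).
Proof. by rewrite big_imset /=; [rewrite big_ord_recl | move=> s1 s2 _ _ []]. Qed.

Lemma prod_center_edge (R : comPzRingType) (x : V -> R) :
  \prod_(s in center_edge k) x s = x None * \prod_(j < n) x (Some (j, ord0)).
Proof.
rewrite big_setU1 /=; last by apply/negP => /imsetP[].
rewrite big_imset /=; last by move=> p1 p2 _ _ [].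
rewrite (eq_bigl (fun p : 'I_n * 'I_k => xpredT p.1 && (p.2 == ord0))) //.
rewrite (eq_bigr (fun p : 'I_n * 'I_k => (fun j s => x (Some (j, s))) p.1 p.2)); last by case.
rewrite -(pair_big_dep xpredT (fun _ s => s == ord0) (fun j s => x (Some (j, s)))).
by congr (_ * _); apply: eq_bigr => j _; rewrite big_pred1_eq.
Qed.

Lemma hdeg_sunflower_base (R : pzSemiRingType) (j : 'I_n) :
  (hdeg (sunflower k) (Some (j, ord0)))%:R = 2 :> R.
Proof. by rewrite hdegE sum_sunflower_edges_Some. Qed.

Lemma sunflower_system_of_H_eigen (R : comPzRingType) (lam : R) (x : V -> R) :
  (forall v, lap_apply (sunflower k) k x v = lam * x v ^+ (k - 1)) ->
  sunflower_system lam (x None) (fun j => x (Some (j, ord0)))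
    (fun j s => x (Some (j, lift ord0 s))).
Proof.
move=> eig; have sum_eq v :
    \sum_(e in sunflower k | v \in e) (x v ^+ k - \prod_(s in e) x s) = lam * x v ^+ k.
  by rewrite -mulX_lap_apply // eig mulrCA -exprS subn1.
split=> [|j|j s].
- move: (sum_eq None); rewrite sum_sunflower_edges_None prod_center_edge => h.
  by rewrite mulrBl mul1r -h; ring.
- move: (sum_eq (Some (j, ord0))); rewrite sum_sunflower_edges_Some prod_center_edge prod_petal.
  by rewrite eqxx => h; rewrite mulrBl -h; ring.
- move: (sum_eq (Some (j, lift ord0 s))); rewrite sum_sunflower_edges_Some add0r prod_petal.
  by move=> h; rewrite mulrBl mul1r -h; ring.
Qed.
End SunflowerCombinatorics.

Theorem proposition3p5 (R : realType) (k : nat) :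
  odd k -> (3 <= k)%N -> is_largest_H_eigenvalue (sunflower k) k (2 : R).
Proof.
case: k => [|n] // k_odd k_ge3; have n_even : ~~ odd n by [].
split.
- have n_gt0 : (0 < n)%N by rewrite -ltnS (leq_trans _ k_ge3).
  rewrite -(hdeg_sunflower_base R (Ordinal n_gt0)).
  exact: uniform_hdeg_H_eigenvalue k_ge3 (@sunflower_uniform n).
- move=> mu [x [[v xv_neq0] eig]]; rewrite leNgt; apply/negP => mu_gt2.
  have [c0 a0 y0] := sunflower_system_eq0 n_even mu_gt2 (sunflower_system_of_H_eigen eig).
  move: xv_neq0; case: v => [[j s]|]; last by rewrite c0 eqxx.
  by case: (unliftP ord0 s) => [s' ->|->]; rewrite ?y0 ?a0 eqxx.
Qed.
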